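(* Let $q\ge 1$, $n\ge1$ and $\theta\ge 1$ be integers, and let $X=(X_1,\dots,X_n)$ be a random vector with values in $[q]^n$. Let $\sigma$ be a uniformly random permutation of $[n]$, independent of $X$. Then $$\mathbb E_{X,\sigma}\left[\sum_{i=\theta}^n \mathrm{TV}\Big(\big(X_{\sigma(i)}\mid \{X_{\sigma(j)}\}_{j\in[i-\theta]}\big),\ \big(X_{\sigma(i)}\mid \{X_{\sigma(j)}\}_{j\in[i-1]}\big)\Big)^2\right]\le \frac{(\theta-1)\log q}{2}.$$
   Context: $\mathrm{TV}$ is total variation distance and $\log$ is the natural logarithm. For a set $J$ of indices, $(X_k\mid\{X_j\}_{j\in J})$ denotes the conditional law of $X_k$ given the values of $(X_j)_{j\in J}$, evaluated at the realized values of $X$ (so it is a random distribution on $[q]$); $[0]=\emptyset$. *)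

From HB Require Import structures.
From mathcomp Require Import all_boot all_order all_algebra all_fingroup.
From mathcomp Require Import reals exp.
Set Implicit Arguments. Unset Strict Implicit. Unset Printing Implicit Defensive.
Import Order.TTheory GRing.Theory Num.Theory.
Local Open Scope ring_scope.

(* The random vector X in [q]^n is given by its law
   p : {ffun {ffun 'I_n -> 'I_q} -> R}, a probability mass function on [q]^n.
   Coordinates are 0-based: 'I_n = {0,...,n-1}, 'I_q = {0,...,q-1}. *)

Definition is_pmf (R : realType) (T : finType) (p : {ffun T -> R}) : Prop :=
  (forall x, 0 <= p x) /\ \sum_(x : T) p x = 1.

Definition agree (n q : nat) (J : {set 'I_n}) (x y : {ffun 'I_n -> 'I_q}) : bool :=
  [forall j in J, y j == x j].

(* Conditional law of X_k given (X_j)_{j in J}, evaluated at the realized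
   values x:  a |-> P(X_k = a, X_J = x_J) / P(X_J = x_J).
   (When P(X_J = x_J) = 0 this is 0 by MathComp's convention 0^-1 = 0; such x
   have probability zero and do not contribute to expectations.) *)
Definition cond_law (R : realType) (n q : nat) (p : {ffun {ffun 'I_n -> 'I_q} -> R})
    (J : {set 'I_n}) (k : 'I_n) (x : {ffun 'I_n -> 'I_q}) (a : 'I_q) : R :=
  (\sum_(y | agree J x y && (y k == a)) p y) / (\sum_(y | agree J x y) p y).

Definition TV (R : realType) (q : nat) (mu nu : 'I_q -> R) : R :=
  (\sum_(a : 'I_q) `|mu a - nu a|) / 2.

(* The set {sigma(j) : j in [m]} (1-based), i.e. images of 0-based positions < m. *)
Definition first_pos (n : nat) (s : {perm 'I_n}) (m : nat) : {set 'I_n} :=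
  [set s j | j in [set j : 'I_n | (j < m)%N]].

(* The 1-based index i
   corresponds to the 0-based position k = i - 1, so i ranges over theta..n
   iff k ranges over theta-1..n-1, [i-theta] = positions < k+1-theta and
   [i-1] = positions < k. *)
Definition TVsum (R : realType) (n q theta : nat) (p : {ffun {ffun 'I_n -> 'I_q} -> R})
    (s : {perm 'I_n}) (x : {ffun 'I_n -> 'I_q}) : R :=
  \sum_(k < n | (theta.-1 <= k)%N)
     (TV (cond_law p (first_pos s (k.+1 - theta)) (s k) x)
         (cond_law p (first_pos s k) (s k) x)) ^+ 2.

Definition expected_TVsum (R : realType) (n q theta : nat)
    (p : {ffun {ffun 'I_n -> 'I_q} -> R}) : R :=
  (#|{perm 'I_n}|%:R)^-1 *
    \sum_(s : {perm 'I_n}) \sum_(x : {ffun 'I_n -> 'I_q}) p x * TVsum theta p s x.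

From HB Require Import structures.
From mathcomp Require Import all_boot all_order all_algebra all_fingroup.
From mathcomp Require Import all_classical all_reals all_analysis.
From mathcomp Require Import ring lra.
Import Order.TTheory GRing.Theory Num.Theory.
Local Open Scope ring_scope.

(* Write H(J, k) = E[- ln P(X_k = x_k | X_J)] for the conditional entropy.  For
   J included in J', the expected Kullback-Leibler divergence between the laws of X_k
   given X_J' and given X_J is exactly H(J, k) - H(J', k), so Pinsker's inequality
   bounds the expected squared total variation by half this entropy drop.  Pinsker
   itself follows from the rational bound ln t >= (t-1)(5t+1)/(2t(t+2)), which gives
   (a-b)^2 <= (2a/3 + 4b/3)(a ln(a/b) - a + b) termwise, and Cauchy-Schwarz.
   Averaging over the uniform permutation sigma, exchangeability makes the bound for
   position i equal to G(i-theta) - G(i-1), where G(m) is the average entropy of the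
   (m+1)-st revealed coordinate given the first m.  The sum over i telescopes to
   theta - 1 values of G minus theta - 1 others, and 0 <= G <= ln q. *)

Section RealInequalities.
Context {R : realType}.

Definition ln_pade (t : R) : R := (t - 1) * (5 * t + 1) / (2 * t * (t + 2)).

Lemma is_derive_ln_sub_pade (t : R) : 0 < t ->
  is_derive t 1 (fun u => ln u - ln_pade u) ((t - 1) ^+ 3 / (t ^+ 2 * (t + 2) ^+ 2)).
Proof.
move=> t0; have t0' : t != 0 by rewrite gt_eqF.
have t2 : t + 2 != 0 by rewrite gt_eqF //; lra.
have den0 : 2 * t * (t + 2) != 0 by rewrite !mulf_neq0 // pnatr_eq0.
have dnum : is_derive t 1 (fun u : R => (u - 1) * (5 * u + 1)) (10 * t - 4).
  by apply: is_derive_eq; rewrite /GRing.scale /=; ring.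
have dden : is_derive t 1 (fun u : R => 2 * u * (u + 2)) (4 * t + 4).
  by apply: is_derive_eq; rewrite /GRing.scale /=; ring.
have dinv := is_deriveV (f := fun u => 2 * u * (u + 2)) den0 dden.
have := is_deriveB (is_derive1_ln t0) (is_deriveM dnum dinv).
move=> D; apply: is_derive_eq D _; rewrite /GRing.scale /=.
by field; rewrite t2 t0'.
Qed.

Lemma ln_pade_le_ln (t : R) : 0 < t -> ln_pade t <= ln t.
Proof.
move=> t0; rewrite -subr_ge0.
pose h u := ln u - ln_pade u.
have h1 : h 1 = 0 by rewrite /h /ln_pade ln1 !subrr !mul0r subr0.
have dh u : 0 < u -> derivable h u 1 /\ derive1 h u = (u - 1) ^+ 3 / (u ^+ 2 * (u + 2) ^+ 2).
  by move=> /is_derive_ln_sub_pade du; rewrite derive1E derive_val.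
have hcont a b : 0 < a -> {within `[a, b], continuous h}%classic.
  move=> a0; apply: derivable_within_continuous => u; rewrite in_itv /= => /andP[au _].
  exact: (dh u (lt_le_trans a0 au)).1.
have hprime u : 0 < u -> derive1 h u = (u - 1) ^+ 3 / (u ^+ 2 * (u + 2) ^+ 2).
  by move=> /dh[].
rewrite -/(h t) -h1; have [t1|t1] := leP 1 t.
- apply: (ger0_derive1_le_cc _ _ (hcont 1 t ltr01)); rewrite ?in_itv /= ?lexx ?t1 //.
  + by move=> u; rewrite in_itv /= => /andP[u1 _]; apply: (dh u _).1; lra.
  move=> u; rewrite in_itv /= => /andP[u1 _]; rewrite hprime; last lra.
  by apply: divr_ge0; [apply: exprn_ge0 | apply: mulr_ge0; apply: exprn_ge0]; lra.
- apply: (ler0_derive1_le_cc _ _ (hcont t 1 t0)); rewrite ?in_itv /= ?lexx ?ltW //.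
  + by move=> u; rewrite in_itv /= => /andP[tu _]; apply: (dh u _).1; lra.
  move=> u; rewrite in_itv /= => /andP[tu u1]; rewrite hprime; last lra.
  apply: mulr_le0_ge0; last by rewrite invr_ge0 mulr_ge0 // exprn_ge0 //; lra.
  by rewrite exprS mulr_le0_ge0 ?sqr_ge0 //; lra.
Qed.

Lemma sqr_sub_le_pinsker_term (a b : R) : 0 <= a -> 0 < b ->
  (a - b) ^+ 2 <= (2 * a / 3 + 4 * b / 3) * (a * ln (a / b) - a + b).
Proof.
move=> a0 b0; have [->|an0] := eqVneq a 0; first by rewrite !mul0r !add0r; nra.
have ap : 0 < a by rewrite lt0r an0.
have pade_id : (a - b) ^+ 2 = (2 * a / 3 + 4 * b / 3) * (a * ln_pade (a / b) - a + b).
  by rewrite /ln_pade; field; rewrite an0 gt_eqF //= gt_eqF //; lra.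
rewrite pade_id ler_wpM2l ?lerD2r ?ler_pM2l ?ln_pade_le_ln ?divr_gt0 //; lra.
Qed.

Lemma mul2_le_quadratic (l d w k : R) : 0 <= w -> 0 <= k ->
  d ^+ 2 <= w * k -> 2 * l * d <= l ^+ 2 * w + k.
Proof.
move=> w0 k0 dwk; have [w_eq0|wn0] := eqVneq w 0.
  have -> : d = 0 by apply/eqP; rewrite -sqrf_eq0 eq_le sqr_ge0 andbT -(mul0r k) -w_eq0.
  by rewrite w_eq0 !mulr0 add0r.
have wp : 0 < w by rewrite lt0r wn0.
rewrite -subr_ge0 -(pmulr_rge0 _ wp).
have -> : w * (l ^+ 2 * w + k - 2 * l * d) = (l * w - d) ^+ 2 + (w * k - d ^+ 2) by ring.
by rewrite addr_ge0 ?sqr_ge0 ?subr_ge0.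
Qed.

Lemma sqr_sum_le_mul_sum (I : finType) (d w k : I -> R) :
  (forall i, 0 <= w i) -> (forall i, 0 <= k i) -> (forall i, d i ^+ 2 <= w i * k i) ->
  (\sum_i d i) ^+ 2 <= (\sum_i w i) * (\sum_i k i).
Proof.
move=> w0 k0 dwk; set S := \sum_i d i; set W := \sum_i w i; set K := \sum_i k i.
have W0 : 0 <= W by apply: sumr_ge0.
have K0 : 0 <= K by apply: sumr_ge0.
have quad l : 2 * l * S <= l ^+ 2 * W + K.
  rewrite /S /W /K !mulr_sumr -big_split /=.
  by apply: ler_sum => i _; apply: mul2_le_quadratic.
have [->|Sn0] := eqVneq S 0; first by rewrite expr0n mulr_ge0.
have [W_eq0|Wn0] := eqVneq W 0.
  have := quad ((K + 1) / (2 * S)); rewrite W_eq0 mulr0 add0r.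
  have -> : 2 * ((K + 1) / (2 * S)) * S = K + 1 by field; rewrite Sn0.
  lra.
have := quad (S / W); rewrite -subr_ge0.
have -> : (S / W) ^+ 2 * W + K - 2 * (S / W) * S = (W * K - S ^+ 2) / W.
  by field.
by rewrite pmulr_lge0 ?invr_gt0 ?lt0r ?Wn0 // subr_ge0 mulrC.
Qed.

Lemma pinsker (q : nat) (P Q : 'I_q -> R) :
  (forall a, 0 <= P a) -> (forall a, 0 <= Q a) -> \sum_a P a = 1 -> \sum_a Q a = 1 ->
  (forall a, Q a = 0 -> P a = 0) ->
  TV Q P ^+ 2 <= (\sum_a P a * ln (P a / Q a)) / 2.
Proof.
move=> P0 Q0 P1 Q1 PQ.
pose w a := 2 * P a / 3 + 4 * Q a / 3.
pose k a := P a * ln (P a / Q a) - P a + Q a.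
have term a : `|Q a - P a| ^+ 2 <= w a * k a /\ 0 <= k a.
  have [Qa0|Qan0] := eqVneq (Q a) 0.
    by rewrite /w /k Qa0 (PQ _ Qa0) !mul0r subrr normr0 expr0n /= !addr0 mulr0.
  have Qap : 0 < Q a by rewrite lt0r Qan0 Q0.
  have wp : 0 < w a by rewrite /w; have := P0 a; lra.
  have dwk := sqr_sub_le_pinsker_term _ _ (P0 a) Qap.
  rewrite real_normK ?num_real // -sqrrN opprB; split => //.
  by rewrite -(pmulr_rge0 _ wp); apply: le_trans dwk; apply: sqr_ge0.
have w0 a : 0 <= w a by rewrite /w; have := P0 a; have := Q0 a; lra.
have w_sum : \sum_a w a = 2.
  by rewrite /w big_split /= -!mulr_suml -!mulr_sumr P1 Q1; field.
have k_sum : \sum_a k a = \sum_a P a * ln (P a / Q a).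
  by rewrite /k !big_split /= sumrN P1 Q1 subrK.
have := @sqr_sum_le_mul_sum _ (fun a => `|Q a - P a|) w k w0
  (fun a => (term a).2) (fun a => (term a).1).
by rewrite w_sum k_sum /TV expr_div_n; lra.
Qed.

Lemma ln_le_subr1 (x : R) : 0 < x -> ln x <= x - 1.
Proof. by move=> x0; have := @le_ln1Dx R (x - 1); rewrite addrCA subrr addr0; apply; lra. Qed.

Lemma entropy_le_ln (q : nat) (P : 'I_q -> R) :
  (forall a, 0 <= P a) -> \sum_a P a = 1 -> \sum_a P a * - ln (P a) <= ln (q%:R : R).
Proof.
move=> P0 P1; have qp : 0 < (q%:R : R).
  by case: q P P0 P1 => [P _|//]; rewrite big_ord0 => /eqP; rewrite eq_sym oner_eq0.
suff term : forall a, P a * - ln (P a) <= P a * ln q%:R + (q%:R^-1 - P a).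
  apply: le_trans (ler_sum _ (fun a _ => term a)) _.
  rewrite big_split /= -mulr_suml P1 mul1r sumrB P1 sumr_const card_ord.
  by rewrite -[q%:R^-1 *+ q]mulr_natr mulVf ?gt_eqF // subrr addr0.
move=> a; have [->|Pan0] := eqVneq (P a) 0; first by rewrite !mul0r add0r subr0 invr_ge0 ltW.
have Pap : 0 < P a by rewrite lt0r Pan0 P0.
have ln_le : ln ((q%:R * P a)^-1) <= (q%:R * P a)^-1 - 1.
  by apply: ln_le_subr1; rewrite invr_gt0 mulr_gt0.
rewrite lnV ?posrE ?mulr_gt0 // lnM ?posrE // in ln_le.
have := ler_wpM2l (ltW Pap) ln_le.
have -> : P a * ((q%:R * P a)^-1 - 1) = q%:R^-1 - P a by field; rewrite Pan0 gt_eqF.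
lra.
Qed.

Lemma sumr_sub_shift (G : nat -> R) (a N : nat) :
  \sum_(m < N) (G m - G (m + a)%N) = \sum_(m < a) (G m - G (m + N)%N).
Proof.
have sum_split M M' : \sum_(i < M + M') G i = \sum_(i < M) G i + \sum_(i < M') G (i + M)%N.
  by rewrite big_split_ord /=; congr (_ + _); apply: eq_bigr => i _; rewrite addnC.
by apply/eqP; rewrite !sumrB subr_eq addrAC eq_sym subr_eq -!sum_split addnC.
Qed.

Lemma sumr_lag_sub_le (G : nat -> R) (c : R) (a n : nat) : (forall m, 0 <= G m <= c) ->
  \sum_(k < n | (a <= k)%N) (G (k - a)%N - G k) <= a%:R * c.
Proof.
move=> G0c; have c0 : 0 <= c by have /andP[G0 Gc] := G0c 0%N; apply: le_trans Gc.
rewrite -(big_geq_mkord a n xpredT (fun k => G (k - a)%N - G k)).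
have [na|an] := leqP n a; first by rewrite big_geq // mulr_ge0.
rewrite -{1}[a]add0n big_addn big_mkord.
under eq_bigr do rewrite addnK.
rewrite sumr_sub_shift mulr_natl -[X in c *+ X]card_ord -sumr_const.
apply: ler_sum => m _.
by have /andP[? ?] := G0c m; have /andP[? ?] := G0c (m + (n - a))%N; lra.
Qed.

End RealInequalities.

Section ConditionalLaw.
Context {R : realType} {n q : nat} {p : {ffun {ffun 'I_n -> 'I_q} -> R}}.
Hypothesis p_ge0 : forall x, 0 <= p x.
Local Notation T := {ffun 'I_n -> 'I_q}.
Implicit Types (J : {set 'I_n}) (x y z : T) (k : 'I_n) (a : 'I_q).

Definition marginal J x : R := \sum_(y | agree J x y) p y.

Lemma agree_refl J x : agree J x x.
Proof. by apply/forall_inP. Qed.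

Lemma agree_sym J x y : agree J x y = agree J y x.
Proof. by apply/forall_inP/forall_inP => xy j /xy /eqP ->. Qed.

Lemma agree_subset {J J' x y} : J \subset J' -> agree J' x y -> agree J x =1 agree J y.
Proof.
move=> /fintype.subsetP sJJ' /forall_inP xy z.
by apply: eq_forallb_in => j jJ; rewrite (eqP (xy j (sJJ' j jJ))).
Qed.

Lemma marginal_agree {J x y} : agree J x y -> marginal J x = marginal J y.
Proof. by move=> xy; apply: eq_bigl => z; rewrite (agree_subset (subxx J) xy). Qed.

Lemma cond_law_agree {J J' x y} k : J \subset J' -> agree J' x y ->
  cond_law p J k x = cond_law p J k y.
Proof.
move=> sJJ' xy; apply/funext => a; rewrite /cond_law.
by congr (_ / _); apply: eq_bigl => z; rewrite (agree_subset sJJ' xy).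
Qed.

Lemma p_le_marginal J x : p x <= marginal J x.
Proof. by rewrite /marginal (bigD1 x) ?agree_refl //= lerDl sumr_ge0. Qed.

Lemma marginal_gt0 J x : 0 < p x -> 0 < marginal J x.
Proof. by move=> px; apply: lt_le_trans (p_le_marginal J x). Qed.

Lemma cond_law_ge0 J k x a : 0 <= cond_law p J k x a.
Proof. by rewrite divr_ge0 ?sumr_ge0. Qed.

Lemma cond_law_le1 J k x a : cond_law p J k x a <= 1.
Proof.
rewrite /cond_law -/(marginal J x); have [->|mn0] := eqVneq (marginal J x) 0.
  by rewrite invr0 mulr0.
rewrite ler_pdivrMr ?lt0r ?mn0 ?sumr_ge0 // mul1r /marginal.
by rewrite [leRHS](bigID (fun y => y k == a)) /= lerDl sumr_ge0.
Qed.

Lemma sum_coord_partition k (P : pred T) (G : T -> 'I_q -> R) :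
  \sum_a \sum_(y | P y && (y k == a)) G y a = \sum_(y | P y) G y (y k).
Proof.
rewrite (partition_big (fun y => y k) predT) //=.
by apply: eq_bigr => a _; apply: eq_bigr => y /andP[_ /eqP ->].
Qed.

Lemma sum_cond_law J k x : 0 < p x -> \sum_a cond_law p J k x a = 1.
Proof.
move=> px; rewrite /cond_law -mulr_suml (sum_coord_partition k _ (fun y _ => p y)).
by rewrite divff ?gt_eqF ?marginal_gt0.
Qed.

Lemma cond_law_gt0 J k x : 0 < p x -> 0 < cond_law p J k x (x k).
Proof.
move=> px; rewrite divr_gt0 ?marginal_gt0 //.
by rewrite (bigD1 x) ?agree_refl ?eqxx //= ltr_pwDl ?sumr_ge0.
Qed.

Lemma agree_subsetW {J J' x y} : J \subset J' -> agree J' x y -> agree J x y.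
Proof. by move=> sJJ' xy; rewrite (agree_subset sJJ' xy) agree_refl. Qed.

Lemma cond_law_eq0_subset J J' k x a : J \subset J' -> 0 < p x ->
  cond_law p J k x a = 0 -> cond_law p J' k x a = 0.
Proof.
move=> sJJ' px /eqP; rewrite mulf_eq0 invr_eq0 (gt_eqF (marginal_gt0 J _ px)) orbF.
move=> /eqP massJ; rewrite /cond_law.
suff -> : \sum_(y | agree J' x y && (y k == a)) p y = 0 by rewrite mul0r.
apply/eqP; rewrite eq_le sumr_ge0 // andbT -[leRHS]massJ.
rewrite [leRHS]big_mkcond [leLHS]big_mkcond.
apply: ler_sum => y _; case: ifP => [/andP[xy ->]|_]; last by case: ifP.
by rewrite (agree_subsetW sJJ' xy).
Qed.

Lemma expect_cond_law J k (F : T -> 'I_q -> R) :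
  (forall x y a, agree J x y -> F x a = F y a) ->
  \sum_x p x * \sum_a cond_law p J k x a * F x a = \sum_x p x * F x (x k).
Proof.
move=> FJ.
have expand x : p x * \sum_a cond_law p J k x a * F x a =
    \sum_(y | agree J x y) p y * (p x * F y (y k) / marginal J y).
  transitivity
    (\sum_a \sum_(y | agree J x y && (y k == a)) p y * (p x * F x a / marginal J x)).
    rewrite mulr_sumr; apply: eq_bigr => a _.
    by rewrite /cond_law -/(marginal J x) -mulr_suml; ring.
  rewrite (sum_coord_partition k (agree J x) (fun y a => p y * (p x * F x a / marginal J x))).
  by apply: eq_bigr => y xy; rewrite (FJ x y) // (marginal_agree xy).
under eq_bigr do rewrite expand.
rewrite (exchange_big_dep predT) //=; apply: eq_bigr => y _.
under eq_bigl => x do rewrite agree_sym.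
under eq_bigr => x _ do rewrite mulrCA.
rewrite -!mulr_suml -/(marginal J y).
have [m0|mn0] := eqVneq (marginal J y) 0.
  suff -> : p y = 0 by rewrite !(mul0r, mulr0).
  by apply/eqP; rewrite eq_le p_ge0 andbT -m0 p_le_marginal.
by field.
Qed.

End ConditionalLaw.

Section ConditionalEntropy.
Context {R : realType} {n q : nat} (p : {ffun {ffun 'I_n -> 'I_q} -> R}).
Hypotheses (p_ge0 : forall x, 0 <= p x) (p_sum1 : \sum_x p x = 1).
Local Notation T := {ffun 'I_n -> 'I_q}.
Implicit Types (J : {set 'I_n}) (x : T) (k : 'I_n).

Definition cond_entropy J k : R := - \sum_x p x * ln (cond_law p J k x (x k)).

Lemma cond_entropy_ge0 J k : 0 <= cond_entropy J k.
Proof.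
rewrite oppr_ge0 sumr_le0 // => x _.
by rewrite mulr_ge0_le0 ?ln_le0 ?cond_law_le1.
Qed.

Lemma cond_entropy_le_ln J k : cond_entropy J k <= ln (q%:R : R).
Proof.
have -> : cond_entropy J k =
    \sum_x p x * \sum_a cond_law p J k x a * - ln (cond_law p J k x a).
  rewrite (expect_cond_law p_ge0 J k (fun x a => - ln (cond_law p J k x a))).
    by rewrite /cond_entropy -sumrN; apply: eq_bigr => x _; rewrite mulrN.
  by move=> x y a xy; rewrite (cond_law_agree k (subxx J) xy).
rewrite -[leRHS]mul1r -{1}p_sum1 mulr_suml; apply: ler_sum => x _.
have [->|px0] := eqVneq (p x) 0; first by rewrite !mul0r.
have px : 0 < p x by rewrite lt0r px0 p_ge0.
rewrite ler_pM2l //; apply: entropy_le_ln; last exact: sum_cond_law.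
by move=> a; exact: cond_law_ge0.
Qed.

Lemma expect_KL_cond_law J J' k : J \subset J' ->
  \sum_x p x * \sum_a cond_law p J' k x a * ln (cond_law p J' k x a / cond_law p J k x a)
  = cond_entropy J k - cond_entropy J' k.
Proof.
move=> sJJ'.
rewrite (expect_cond_law p_ge0 J' k
  (fun x a => ln (cond_law p J' k x a / cond_law p J k x a))); last first.
  by move=> x y a xy; rewrite (cond_law_agree k (subxx J') xy) (cond_law_agree k sJJ' xy).
rewrite /cond_entropy opprK addrC -sumrB; apply: eq_bigr => x _.
have [->|px0] := eqVneq (p x) 0; first by rewrite !mul0r subrr.
have px : 0 < p x by rewrite lt0r px0 p_ge0.
by rewrite ln_div ?posrE ?cond_law_gt0 // mulrBr.
Qed.

Lemma expect_sqr_TV_cond_law_le J J' k : J \subset J' ->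
  \sum_x p x * TV (cond_law p J k x) (cond_law p J' k x) ^+ 2
  <= (cond_entropy J k - cond_entropy J' k) / 2.
Proof.
move=> sJJ'; rewrite -(expect_KL_cond_law _ _ k sJJ') mulr_suml.
apply: ler_sum => x _; have [->|px0] := eqVneq (p x) 0; first by rewrite !mul0r.
have px : 0 < p x by rewrite lt0r px0 p_ge0.
rewrite -mulrA ler_pM2l //; apply: pinsker; rewrite ?sum_cond_law //.
- by move=> a; exact: cond_law_ge0.
- by move=> a; exact: cond_law_ge0.
by move=> a; exact: cond_law_eq0_subset.
Qed.

End ConditionalEntropy.

Lemma first_posS (n : nat) (s : {perm 'I_n}) (m m' : nat) : (m <= m')%N ->
  first_pos s m \subset first_pos s m'.
Proof.
move=> mm'; apply: imsetS; apply/fintype.subsetP => j.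
by rewrite !inE => /leq_trans; apply.
Qed.

Lemma sum_perm_first_pos_swap {R : realType} {n : nat}
    (f : {set 'I_n} -> 'I_n -> R) {m : nat} {k k' : 'I_n} :
  (m <= k)%N -> (m <= k')%N ->
  \sum_(s : {perm 'I_n}) f (first_pos s m) (s k) =
  \sum_(s : {perm 'I_n}) f (first_pos s m) (s k').
Proof.
move=> mk mk'; rewrite (reindex_inj (mulgI (tperm k k'))) /=.
apply: eq_bigr => s _; rewrite permM tpermL; congr f.
apply: eq_in_imset => j; rewrite inE => jm.
by rewrite permM tpermD //; apply: contraTneq jm => <-; rewrite -leqNgt.
Qed.

Lemma expected_TVsumE (R : realType) (n q theta : nat)
    (p : {ffun {ffun 'I_n -> 'I_q} -> R}) :
  expected_TVsum theta p =
  \sum_(k < n | (theta.-1 <= k)%N) #|{perm 'I_n}|%:R^-1 *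
    \sum_(s : {perm 'I_n}) \sum_x p x *
      TV (cond_law p (first_pos s (k.+1 - theta)) (s k) x)
         (cond_law p (first_pos s k) (s k) x) ^+ 2.
Proof.
rewrite /expected_TVsum /TVsum -mulr_sumr; congr (_ * _).
under eq_bigr do under eq_bigr do rewrite mulr_sumr.
by under eq_bigr do rewrite exchange_big; rewrite exchange_big.
Qed.

Section AverageEntropy.
Context {R : realType} {n q : nat} (p : {ffun {ffun 'I_n.+1 -> 'I_q} -> R}).
Hypotheses (p_ge0 : forall x, 0 <= p x) (p_sum1 : \sum_x p x = 1).
Local Notation N := #|{perm 'I_n.+1}|.

Lemma card_perm_gt0 : 0 < N%:R :> R.
Proof. by rewrite ltr0n; apply/card_gt0P; exists 1%g. Qed.

Definition avg_entropy (m : nat) : R :=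
  N%:R^-1 * \sum_(s : {perm 'I_n.+1}) cond_entropy p (first_pos s m) (s (inord m)).

Lemma avg_entropy_bounds m : 0 <= avg_entropy m <= ln (q%:R : R).
Proof.
apply/andP; split.
  rewrite mulr_ge0 ?invr_ge0 ?(ltW card_perm_gt0) //.
  by apply: sumr_ge0 => s _; exact: cond_entropy_ge0.
rewrite ler_pdivrMl ?card_perm_gt0 //.
apply: le_trans (ler_sum _ (fun s _ => cond_entropy_le_ln _ p_ge0 p_sum1 _ _)) _.
by rewrite sumr_const mulr_natl.
Qed.

Lemma avg_sqr_TV_le (a : nat) (k : 'I_n.+1) :
  N%:R^-1 * \sum_(s : {perm 'I_n.+1}) \sum_x p x *
    TV (cond_law p (first_pos s (k - a)) (s k) x) (cond_law p (first_pos s k) (s k) x) ^+ 2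
  <= (avg_entropy (k - a) - avg_entropy k) / 2.
Proof.
apply: le_trans (_ : _ <= N%:R^-1 * \sum_(s : {perm 'I_n.+1})
    (cond_entropy p (first_pos s (k - a)) (s k) - cond_entropy p (first_pos s k) (s k)) / 2) _.
  rewrite ler_pM2l ?invr_gt0 ?card_perm_gt0 //; apply: ler_sum => s _.
  exact/expect_sqr_TV_cond_law_le/first_posS/leq_subr.
have k_a : (k - a < n.+1)%N by apply: leq_ltn_trans (leq_subr a k) (ltn_ord k).
rewrite -mulr_suml sumrB /avg_entropy inord_val.
rewrite (sum_perm_first_pos_swap (cond_entropy p) (leq_subr a k)
  (_ : (k - a <= inord (k - a))%N)) ?inordK //.
by rewrite mulrA mulrBr.
Qed.

End AverageEntropy.

Theorem lemma2p5 (R : realType) (q n theta : nat)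
    (hq : (1 <= q)%N) (hn : (1 <= n)%N) (htheta : (1 <= theta)%N)
    (p : {ffun {ffun 'I_n -> 'I_q} -> R}) (hp : is_pmf p) :
  expected_TVsum theta p <= (theta.-1)%:R * ln (q%:R : R) / 2.
Proof.
case: hp => p_ge0 p_sum1; case: n hn p p_ge0 p_sum1 => [//|n] _ p p_ge0 p_sum1.
set a := theta.-1; have lag (k : nat) : (k.+1 - theta)%N = (k - a)%N.
  by rewrite -(prednK htheta) subSS.
rewrite expected_TVsumE; apply: le_trans (_ : _ <=
    \sum_(k < n.+1 | (a <= k)%N) (avg_entropy p (k - a) - avg_entropy p k) / 2) _.
  by apply: ler_sum => k _; rewrite lag; exact: avg_sqr_TV_le.
rewrite -mulr_suml ler_pM2r ?invr_gt0 ?ltr0Sn //.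
exact: sumr_lag_sub_le (avg_entropy_bounds p p_ge0 p_sum1).
Qed.
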